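(* Let $G$ be a finite group, $N\trianglelefteq G$, $\theta\in\mathrm{Irr}(N)$ and $P\in\mathrm{Syl}_p(G)$. (a) If $\chi\in\mathrm{Irr}^{\mathrm{rel}}_{p'}(G|\theta)$, then $\chi_N$ has some $P$-invariant irreducible constituent, any two such $P$-invariant irreducible constituents are $\mathbf N_G(P)$-conjugate, and these $P$-invariant constituents extend to $NP$. (b) Suppose that $N\subseteq M\trianglelefteq G$, let $\eta\in\mathrm{Irr}(M|\theta)$ and $\chi\in\mathrm{Irr}(G|\eta)$. Then $\chi\in\mathrm{Irr}^{\mathrm{rel}}_{p'}(G|\theta)$ if and only if $\chi\in\mathrm{Irr}^{\mathrm{rel}}_{p'}(G|\eta)$ and $\eta\in\mathrm{Irr}^{\mathrm{rel}}_{p'}(M|\theta)$.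
   Context: $p$ is a prime. For $N\trianglelefteq G$ and $\theta\in\mathrm{Irr}(N)$, $\mathrm{Irr}^{\mathrm{rel}}_{p'}(G|\theta)$ is the set of $\chi\in\mathrm{Irr}(G|\theta)$ (irreducible characters of $G$ whose restriction to $N$ has $\theta$ as a constituent) such that $p$ does not divide $\chi(1)/\theta(1)$. *)

From mathcomp Require Import all_boot all_order all_algebra all_fingroup all_solvable all_field all_character.
Set Implicit Arguments. Unset Strict Implicit. Unset Printing Implicit Defensive.
Import GRing.Theory Num.Theory.
Local Open Scope ring_scope.

(* chi \in Irr^rel_{p'}(G | theta) for chi : 'CF(G) irreducible, theta : 'CF(N) irreducible:
   theta is a constituent of chi_N and p does not divide chi(1)/theta(1)
   (this ratio is a natural number whenever theta is a constituent of chi_N). *)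
Definition irr_rel_p' (gT : finGroupType) (p : nat) (G N : {group gT})
    (theta : 'CF(N)) (chi : 'CF(G)) : bool :=
  ('[ 'Res[N] chi, theta] != 0) &&
  ~~ (p %| Num.truncn (chi 1%g / theta 1%g))%N.

From mathcomp Require Import all_boot all_order all_algebra all_fingroup all_solvable all_field all_character.
Set Implicit Arguments. Unset Strict Implicit. Unset Printing Implicit Defensive.
Import GRing.Theory Num.Theory.
Local Open Scope ring_scope.

(* Clifford theory gives chi_N = e (theta_1 + ... + theta_n) with n = |G : I_G(theta)|, so
   chi(1) / theta(1) = e n: chi is relatively p' over theta iff p divides neither e nor n, and
   (b) is the multiplicativity of this ratio along N <= M <= G.  If p does not divide n, the
   stabiliser I_G(theta) contains a Sylow p-subgroup of G, so some conjugate of theta is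
   P-invariant; two P-invariant conjugates differ by an element which Sylow's theorem in the
   stabiliser turns into an element of N_G(P).  Finally, a P-invariant theta occurring with
   p'-multiplicity in a character of NP extends to NP: for L/N normal of order p in NP/N,
   every constituent of the character over theta restricts to theta, NP permutes these
   constituents, and counting along orbits yields an NP-invariant one with p'-multiplicity,
   so induction on |NP : N| applies. *)

Lemma sub_inertiaP (gT : finGroupType) (N P : {group gT}) (phi : 'CF(N)) :
    (P \subset 'N(N))%g ->
  reflect (forall x, x \in P -> (phi ^ x)%CF = phi) (P \subset 'I[phi])%g.
Proof.
move=> nNP; apply: (iffP subsetP) => [IPphi x Px | Pphi x Px].
  exact/inertiaJ/IPphi.
by rewrite inE (subsetP nNP) // Pphi ?eqxx.
Qed.

Lemma irr_rel_p'_deg (gT : finGroupType) p (G N : {group gT}) (i : Iirr G)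
    (t : Iirr N) n :
    'chi_i 1%g = n%:R * 'chi_t 1%g ->
  irr_rel_p' p 'chi_t 'chi_i = (t \in irr_constt ('Res[N] 'chi_i)) && ~~ (p %| n)%N.
Proof. by move=> chi1; rewrite /irr_rel_p' -irr_consttE chi1 mulfK ?irr1_neq0 // natrK. Qed.

Lemma irr_rel_p'_trans (gT : finGroupType) p (G M N : {group gT})
    (i : Iirr G) (e : Iirr M) (t : Iirr N) :
    prime p -> (N <| G)%g -> (M <| G)%g -> N \subset M ->
    t \in irr_constt ('Res[N] 'chi_e) -> e \in irr_constt ('Res[M] 'chi_i) ->
  irr_rel_p' p 'chi_t 'chi_i = irr_rel_p' p 'chi_e 'chi_i && irr_rel_p' p 'chi_t 'chi_e.
Proof.
move=> pr_p nsNG nsMG sNM te ei; have sMG := normal_sub nsMG.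
have [n chi_i1] := dvdn_constt_Res1_irr1 nsMG ei.
have [m chi_e1] := dvdn_constt_Res1_irr1 (normalS sNM sMG nsNG) te.
have ti : t \in irr_constt ('Res[N] 'chi_i).
  by rewrite -(cfResRes _ sNM sMG) (constt_Res_trans _ ei) ?cfRes_char ?irr_char.
have chi_i1t : 'chi_i 1%g = (n * m)%:R * 'chi_t 1%g.
  by rewrite natrM -mulrA -chi_e1.
rewrite (irr_rel_p'_deg _ chi_i1t) (irr_rel_p'_deg _ chi_i1) (irr_rel_p'_deg _ chi_e1).
by rewrite ti ei te Euclid_dvdM // negb_or.
Qed.

Section CliffordConstituents.

Variables (gT : finGroupType) (G N : {group gT}) (i : Iirr G).
Hypothesis nsNG : (N <| G)%g.

Lemma constt_Res_irr_conjg (u1 u2 : Iirr N) :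
    u1 \in irr_constt ('Res[N] 'chi_i) -> u2 \in irr_constt ('Res[N] 'chi_i) ->
  exists2 g, g \in G & 'chi_u2 = ('chi_u1 ^ g)%CF.
Proof.
move=> u1i u2i; apply/cfclassP; apply: contraTT u2i => u1G'u2.
rewrite irr_consttE negbK (Clifford_Res_sum_cfclass nsNG u1i) reindex_cfclass //.
rewrite cfdotZl cfdot_suml big1 ?mulr0 // => j u1Gj; rewrite cfdot_irr.
by case: eqP u1Gj => // ->; rewrite (negPf u1G'u2).
Qed.

Lemma cfdot_Res_constt (u1 u2 : Iirr N) :
    u1 \in irr_constt ('Res[N] 'chi_i) -> u2 \in irr_constt ('Res[N] 'chi_i) ->
  '['Res[N] 'chi_i, 'chi_u2] = '['Res[N] 'chi_i, 'chi_u1].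
Proof.
by move=> u1i u2i; have [g Gg ->] := constt_Res_irr_conjg u1i u2i; rewrite cfdot_Res_conjg.
Qed.

Lemma irr1_Clifford (t : Iirr N) :
    t \in irr_constt ('Res[N] 'chi_i) ->
  'chi_i 1%g
    = (Num.truncn '['Res[N] 'chi_i, 'chi_t] * #|G : 'I_G['chi_t]|%g)%:R * 'chi_t 1%g.
Proof.
move=> ti; rewrite -(cfRes1 N) {1}(Clifford_Res_sum_cfclass nsNG ti) cfunE sum_cfunE.
rewrite natrM truncnK ?Cnat_cfdot_char ?cfRes_char ?irr_char // -mulrA.
congr (_ * _); rewrite -size_cfclass mulr_natl -[size _]card_ord big_tnth -sumr_const.
by apply: eq_bigr => k _; have /cfclassP[y _ ->] := mem_tnth k (in_tuple _); rewrite cfConjg1.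
Qed.

Lemma irr_rel_p'_Clifford p (t : Iirr N) :
    prime p -> t \in irr_constt ('Res[N] 'chi_i) ->
  irr_rel_p' p 'chi_t 'chi_i
    = ~~ (p %| Num.truncn '['Res[N] 'chi_i, 'chi_t])%N
      && ~~ (p %| #|G : 'I_G['chi_t]|%g)%N.
Proof.
by move=> pr_p ti; rewrite (irr_rel_p'_deg _ (irr1_Clifford ti)) ti Euclid_dvdM // negb_or.
Qed.

End CliffordConstituents.

Lemma cfRes_prime_index_invariant (gT : finGroupType) p (L N : {group gT})
    (j : Iirr L) (t : Iirr N) :
    prime p -> (N <| L)%g -> #|L : N|%g = p -> (L \subset 'I['chi_t])%g ->
    t \in irr_constt ('Res[N] 'chi_j) ->
  'Res[N] 'chi_j = 'chi_t.
Proof.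
move=> pr_p nsNL iLN ILt tj.
have constt_eq_t u : u \in irr_constt ('Res[N] 'chi_j) -> u = t.
  move=> uj; have [g Lg chi_u] := constt_Res_irr_conjg nsNL tj uj.
  by apply: irr_inj; rewrite chi_u inertiaJ ?(subsetP ILt).
have [/irrP[k chi_k] | [c inj_c chi_c]] := cfRes_prime_irr_cases j nsNL iLN pr_p.
  by rewrite chi_k -(constt_eq_t k) // chi_k irr_consttE cfnorm_irr oner_eq0.
have c_eq_t r : c r = t.
  apply: constt_eq_t; rewrite irr_consttE chi_c cfdot_suml (bigD1 r) //=.
  rewrite cfnorm_irr big1 ?addr0 ?oner_eq0 // => r' r'r.
  by rewrite cfdot_irr (inj_eq inj_c) (negPf r'r).
have := c_eq_t (Ordinal (prime_gt0 pr_p)).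
by rewrite -(c_eq_t (Ordinal (prime_gt1 pr_p))) => /inj_c/(congr1 val).
Qed.

Lemma cfdot_Res_prime_index_invariant (gT : finGroupType) p (L N : {group gT})
    (t : Iirr N) (phi : 'CF(L)) :
    prime p -> (N <| L)%g -> #|L : N|%g = p -> (L \subset 'I['chi_t])%g ->
  '['Res[N] phi, 'chi_t] = \sum_(j | 'Res[N] 'chi_j == 'chi_t) '[phi, 'chi_j].
Proof.
move=> pr_p nsNL iLN ILt.
have cfdot_Res_irr (j : Iirr L) : '['Res[N] 'chi_j, 'chi_t] = ('Res[N] 'chi_j == 'chi_t)%:R.
  case: eqP => [-> | Rj]; first exact: cfnorm_irr.
  apply/eqP; rewrite -[_ == _]negbK -irr_consttE; apply/negP => tj.
  exact: Rj (cfRes_prime_index_invariant pr_p nsNL iLN ILt tj).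
rewrite {1}(cfun_sum_cfdot phi) linear_sum cfdot_suml [RHS]big_mkcond /=.
by apply: eq_bigr => j _; rewrite linearZ cfdotZl cfdot_Res_irr mulr_natr mulrb.
Qed.

Lemma dvdn_sum_conjg_stable (gT : finGroupType) (p : nat) (H L : {group gT})
    (S : {set Iirr L}) (w : Iirr L -> nat) :
    prime p -> (L <| H)%g -> p.-nat #|H : L|%g ->
    (forall j x, j \in S -> x \in H -> conjg_Iirr j x \in S) ->
    (forall j x, x \in H -> w (conjg_Iirr j x) = w j) ->
    (forall j, j \in S -> (H \subset 'I['chi_j])%g -> p %| w j)%N ->
  (p %| \sum_(j in S) w j)%N.
Proof.
move=> pr_p nsLH pHL stabS wJ p_w_fixed.
pose orbits := [set cfclass_Iirr H j | j in S].
have cover_orbits : cover orbits = S.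
  apply/setP => k; apply/bigcupP/idP => [[_ /imsetP[j Sj ->] /imsetP[x Hx ->]] | Sk].
    exact: stabS.
  by exists (cfclass_Iirr H k); rewrite ?imset_f // cfclass_IirrE cfclass_refl.
have triv_orbits : trivIset orbits.
  apply/trivIsetP => _ _ /imsetP[j1 _ ->] /imsetP[j2 _ ->]; apply: contraR.
  case/pred0Pn => k /andP[/= j1k j2k].
  by move: j1k; rewrite -eq_cfclass_IirrE => /eqP <-; rewrite eq_cfclass_IirrE.
rewrite -cover_orbits big_trivIset //; apply: dvdn_sum => _ /imsetP[j Sj ->].
have -> : (\sum_(k in cfclass_Iirr H j) w k = #|H : 'I_H['chi_j]|%g * w j)%N.
  rewrite -card_cfclass_Iirr // -sum_nat_const.
  by apply: eq_bigr => _ /imsetP[x Hx ->]; apply: wJ.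
have [p_dvd_index | p'index] := boolP (p %| #|H : 'I_H['chi_j]|%g)%N.
  exact: dvdn_mulr.
have : #|H : 'I_H['chi_j]|%g = 1%N.
  apply: (pnat_1 _ (_ : p^'.-nat _)); rewrite ?p'natE //.
  by apply: pnat_dvd pHL; rewrite indexgS // subsetI normal_sub // sub_inertia.
by move/eqP; rewrite indexg_eq1 subsetI => /andP[_ /(p_w_fixed j Sj)/dvdn_mull].
Qed.

Lemma pquo_normal_index_prime (gT : finGroupType) (p : nat) (H N : {group gT}) :
    (N <| H)%g -> (p.-group (H / N))%g -> (N \proper H)%g ->
  exists L : {group gT}, [/\ N \subset L, (L <| H)%g & #|L : N|%g = p].
Proof.
move=> nsNH pHN ltNH; have ntHN : (H / N != 1)%g by rewrite quotient_neq1.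
have [pr_p _ [m cardHN]] := pgroup_pdiv pHN ntHN.
have logHN : (1 <= logn p #|H / N|%g)%N by rewrite cardHN pfactorK.
have [Q [_ nsQ cardQ]] := normal_pgroup pHN (normal_refl _) logHN.
exists (coset N @*^-1 Q)%G; split; first exact: sub_cosetpre.
  by rewrite -(quotientGK nsNH) cosetpre_normal.
by rewrite -card_quotient ?cosetpreK ?cardQ // subsetIl.
Qed.

Lemma pquo_invariant_irr_extendible (gT : finGroupType) (p : nat) (H N : {group gT})
    (t : Iirr N) (psi : 'CF(H)) :
    prime p -> (N <| H)%g -> (p.-group (H / N))%g -> (H \subset 'I['chi_t])%g ->
    psi \is a character -> ~~ (p %| Num.truncn '['Res[N] psi, 'chi_t])%N ->
  exists k : Iirr H, 'Res[N] 'chi_k = 'chi_t.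
Proof.
move=> pr_p; move: {2}#|H : N|%g.+1 (ltnSn #|H : N|%g) => n.
elim: n N t => // n IHn N t; rewrite ltnS => leHNn nsNH pHN IHt psiC p'psiNt.
have [sNH nNH] := andP nsNH.
have [/val_inj eqNH | ltNH] := eqVproper sNH.
  by subst N; exists t; rewrite cfRes_id.
have [L [sNL nsLH iLN]] := pquo_normal_index_prime nsNH pHN ltNH.
have sLH := normal_sub nsLH; have nsNL := normalS sNL sLH nsNH.
have pHNn : p.-nat #|H : N|%g by rewrite -card_quotient.
pose S := [set j : Iirr L | 'Res[N] 'chi_j == 'chi_t].
pose w j := Num.truncn '['Res[L] psi, 'chi[L]_j].
have p'w : ~~ (p %| \sum_(j in S) w j)%N.
  have wE j : '['Res[L] psi, 'chi_j] = (w j)%:R.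
    by rewrite truncnK ?Cnat_cfdot_char ?cfRes_char ?irr_char.
  rewrite -(cfResRes psi sNL sLH) (cfdot_Res_prime_index_invariant _ pr_p) //
    ?(subset_trans sLH IHt) // (eq_bigr _ (fun j _ => wE j)) -natr_sum natrK in p'psiNt.
  by rewrite (eq_bigl _ _ (fun j => in_set _ j)).
have [j /and3P[Sj IHj p'wj]] :
    exists j, [&& j \in S, H \subset 'I['chi_j]%g & ~~ (p %| w j)%N].
  apply/existsP; apply: contraR p'w => /existsPn p_w.
  apply: (dvdn_sum_conjg_stable pr_p nsLH) => [||j x Hx|j Sj IHj].
  - by apply: pnat_dvd pHNn; apply: indexgS.
  - move=> j x; rewrite !inE => /eqP Rj Hx.
    by rewrite conjg_IirrE -(cfConjgRes _ nsLH nsNH Hx) Rj inertiaJ ?(subsetP IHt).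
  - by rewrite /w conjg_IirrE cfdot_Res_conjg.
  - by have := p_w j; rewrite Sj IHj negbK.
have ltHL_n : (#|H : L|%g < n)%N.
  rewrite -(Lagrange_index sLH sNL) iLN in leHNn.
  by apply: leq_trans leHNn; rewrite ltn_Pmulr ?prime_gt1.
have pHL : (p.-group (H / L))%g.
  by rewrite /pgroup card_quotient ?normal_norm // (pnat_dvd _ pHNn) ?indexgS.
have [k Rk] := IHn L j ltHL_n nsLH pHL IHj psiC p'wj.
by exists k; rewrite -(cfResRes _ sNL sLH) Rk; apply/eqP; rewrite inE in Sj.
Qed.

Section SylowInvariantConstituents.

Variables (gT : finGroupType) (p : nat) (G N P : {group gT}).
Hypotheses (nsNG : (N <| G)%g) (sylP : (p.-Sylow(G) P)%g).

Let sPG : (P \subset G)%g := pHall_sub sylP.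
Let nNG : (G \subset 'N(N))%g := normal_norm nsNG.

Lemma Sylow_invariant_conjg (phi : 'CF(N)) :
    prime p -> ~~ (p %| #|G : 'I_G[phi]|%g)%N ->
  exists2 y, y \in G & (P \subset 'I[phi ^ y])%g.
Proof.
move=> pr_p p'GT; have [Q sylQ] := Sylow_exists p 'I_G[phi]%G.
have sylQG : (p.-Sylow(G) Q)%g.
  have [sQT pQ p'TQ] := and3P sylQ.
  rewrite /pHall (subset_trans sQT (subsetIl _ _)) pQ -(Lagrange_index _ sQT) ?subsetIl //.
  by rewrite pnatM p'TQ andbT p'natE.
have [y Gy ->] := Sylow_trans sylQG sylP; exists y => //.
by rewrite -conjg_inertia ?(subsetP nNG) // conjSg (subset_trans (pHall_sub sylQ)) ?subsetIr.
Qed.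

Lemma Sylow_invariant_conjg_norm (phi : 'CF(N)) g :
    g \in G -> (P \subset 'I[phi])%g -> (P \subset 'I[phi ^ g])%g ->
  exists2 y, y \in 'N_G(P)%g & (phi ^ g)%CF = (phi ^ y)%CF.
Proof.
move=> Gg IPphi IPphig; have sTG : ('I_G[phi] \subset G)%g := subsetIl _ _.
have sylP_T : (p.-Sylow('I_G[phi]) P)%g by apply: pHall_subl sylP; rewrite ?subsetI ?sPG.
have sylPg_T : (p.-Sylow('I_G[phi]) (P :^ g^-1))%g.
  apply: pHall_subl sTG _; last by rewrite pHallJ ?groupV.
  by rewrite subsetI sub_conjgV conjGid // sPG sub_conjgV conjg_inertia ?(subsetP nNG).
have [z /setIP[Gz Iz] defPg] := Sylow_trans sylP_T sylPg_T.
exists (z * g)%g.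
  by rewrite inE groupM //=; apply/normP; rewrite conjsgM -defPg conjsgKV.
by rewrite (cfConjgM _ nsNG) // (inertiaJ Iz).
Qed.

Lemma Sylow_invariant_irr_extendible (i : Iirr G) (u : Iirr N) :
    prime p -> (P \subset 'I['chi_u])%g ->
    ~~ (p %| Num.truncn '['Res[N] 'chi_i, 'chi_u])%N ->
  exists j : Iirr (N <*> P)%G, 'Res[N] 'chi_j = 'chi_u.
Proof.
move=> pr_p IPu p'iu; have nNP := subset_trans sPG nNG.
apply: (pquo_invariant_irr_extendible (psi := 'Res[N <*> P] 'chi_i) pr_p).
- by rewrite normalYl.
- by rewrite quotientYidl // quotient_pgroup // (pHall_pgroup sylP).
- by rewrite join_subG sub_inertia.
- by rewrite cfRes_char ?irr_char.
- by rewrite cfResRes ?joing_subl // join_subG normal_sub.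
Qed.

End SylowInvariantConstituents.

Theorem lemma4p3 (gT : finGroupType) (p : nat) (G N P : {group gT})
    (pr_p : prime p) (nNG : (N <| G)%g) (sylP : P \in ('Syl_p(G))%g) (t : Iirr N) :
  (* (a) *)
  (forall i : Iirr G, irr_rel_p' p 'chi_t 'chi[G]_i ->
     [/\ exists2 u : Iirr N, u \in irr_constt ('Res[N] 'chi_i) &
           forall x, x \in P -> ('chi_u ^ x)%CF = 'chi_u,
         forall u1 u2 : Iirr N,
           u1 \in irr_constt ('Res[N] 'chi_i) ->
           (forall x, x \in P -> ('chi_u1 ^ x)%CF = 'chi_u1) ->
           u2 \in irr_constt ('Res[N] 'chi_i) ->
           (forall x, x \in P -> ('chi_u2 ^ x)%CF = 'chi_u2) ->
           exists2 y, y \in ('N_G(P))%g & 'chi_u2 = ('chi_u1 ^ y)%CF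
       & forall u : Iirr N,
           u \in irr_constt ('Res[N] 'chi_i) ->
           (forall x, x \in P -> ('chi_u ^ x)%CF = 'chi_u) ->
           exists j : Iirr (N <*> P)%G, 'Res[N] 'chi_j = 'chi_u]) /\
  (* (b) *)
  (forall (M : {group gT}) (e : Iirr M) (i : Iirr G),
     N \subset M -> (M <| G)%g ->
     t \in irr_constt ('Res[N] 'chi_e) ->
     e \in irr_constt ('Res[M] 'chi_i) ->
     irr_rel_p' p 'chi_t 'chi[G]_i =
       irr_rel_p' p 'chi_e 'chi[G]_i && irr_rel_p' p 'chi_t 'chi[M]_e).
Proof.
rewrite inE in sylP; have nNP := subset_trans (pHall_sub sylP) (normal_norm nNG).
split=> [i rel_i | M e i sNM nsMG te ei]; last exact: irr_rel_p'_trans.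
have ti : t \in irr_constt ('Res[N] 'chi_i) by rewrite irr_consttE; case/andP: rel_i.
rewrite irr_rel_p'_Clifford // in rel_i; case/andP: rel_i => p'mult p'index.
split.
- have [y Gy IPty] := Sylow_invariant_conjg nNG sylP pr_p p'index.
  exists (conjg_Iirr t y); last by apply/(sub_inertiaP _ nNP); rewrite conjg_IirrE.
  by rewrite irr_consttE conjg_IirrE cfdot_Res_conjg // -irr_consttE.
- move=> u1 u2 u1i /(sub_inertiaP _ nNP) IPu1 u2i /(sub_inertiaP _ nNP).
  have [g Gg ->] := constt_Res_irr_conjg nNG u1i u2i.
  exact: (Sylow_invariant_conjg_norm nNG sylP Gg IPu1).
- move=> u ui /(sub_inertiaP _ nNP) IPu.
  apply: (Sylow_invariant_irr_extendible (i := i) nNG sylP pr_p IPu).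
  by rewrite (cfdot_Res_constt nNG ti ui).
Qed.
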